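(* For both the JC model and the K2P model, the linear polynomial $f=q_{GGGG}+q_{GTGT}-q_{GGTT}-q_{GTTG}$ satisfies $f\in\mathcal{I}(V_{T_{12|34}}\ast V_{T_{14|23}})\setminus\mathcal{I}(V_{T_{13|24}})$.
   Context: $T_{12|34}$, $T_{13|24}$, $T_{14|23}$ denote the three unrooted binary trees on leaves $\{1,2,3,4\}$, indexed by their nontrivial split; $\Sigma(T)$ is the set of all splits of $T$ (four trivial plus the nontrivial one). With $G=\mathbb{Z}_2\times\mathbb{Z}_2$ and nucleotide labels $A=(0,0)$, $C=(0,1)$, $G=(1,0)$, $T=(1,1)$, the K3P model on $T$ in Fourier coordinates $q_{g_1g_2g_3g_4}$ ($g_i\in G$) is $q_{g_1g_2g_3g_4}=\prod_{A|B\in\Sigma(T)}a^{A|B}_{\sum_{i\in A}g_i}$ if $\sum_i g_i=0$ and $0$ otherwise; K2P imposes $a^e_G=a^e_T$ and JC imposes $a^e_C=a^e_G=a^e_T$ for all splits $e$. $V_T$ is the Zariski closure in $\mathbb{P}^{255}$ of the image for complex parameters; $V\ast W$ is the join (closure of all lines meeting $V$ and $W$); $\mathcal{I}(V)$ is the ideal of polynomials in the $q$'s vanishing on $V$. *)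

From HB Require Import structures.
From mathcomp Require Import all_boot all_order all_algebra.
From mathcomp Require Import reals complex.
From mathcomp Require Import mpoly.

Set Implicit Arguments.
Unset Strict Implicit.
Unset Printing Implicit Defensive.

Import GRing.Theory Num.Theory.
Local Open Scope ring_scope.

Definition grp := (bool * bool)%type.
Definition gadd (x y : grp) : grp := (x.1 (+) y.1, x.2 (+) y.2).
Definition gzero : grp := (false, false).
Definition nA : grp := (false, false).
Definition nC : grp := (false, true).
Definition nG : grp := (true, false).
Definition nT : grp := (true, true).
Definition gval (x : grp) : nat := 2 * x.1 + x.2.

Definition gsum (A : {set 'I_4}) (g : 'I_4 -> grp) : grp :=
  foldr gadd gzero [seq g i | i <- enum A].

(* ---------- Fourier coordinates q_{g1 g2 g3 g4}, indexed by 'I_256 ----------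
   leaves 1,2,3,4 are 'I_4 elements 0,1,2,3; the coordinate q_{g1g2g3g4} is
   variable number 64 v(g1) + 16 v(g2) + 4 v(g3) + v(g4) with v = gval. *)
Definition qidx (g1 g2 g3 g4 : grp) : 'I_256 :=
  inord (64 * gval g1 + 16 * gval g2 + 4 * gval g3 + gval g4).

Definition nuc_of (d : nat) : grp := (odd (d %/ 2), odd d).

Definition qdec (k : 'I_256) (i : 'I_4) : grp :=
  nuc_of ((k %/ 4 ^ (3 - i)) %% 4).

Inductive tree := T12_34 | T13_24 | T14_23.

Definition leaf (i : nat) : 'I_4 := inord i.

Definition nt_split (T : tree) : {set 'I_4} :=
  match T with
  | T12_34 => [set leaf 0; leaf 1]
  | T13_24 => [set leaf 0; leaf 2]
  | T14_23 => [set leaf 0; leaf 3]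
  end.

(* Sigma(T): the four trivial splits and the nontrivial one, each split A|B
   represented by its side A (the value sum_{i in A} g_i does not depend on
   the side when sum_i g_i = 0). *)
Definition splits (T : tree) : seq {set 'I_4} :=
  [:: [set leaf 0]; [set leaf 1]; [set leaf 2]; [set leaf 3]; nt_split T].

Inductive model := JC | K2P.

Definition model_params (C : ringType) (M : model)
  (a : {set 'I_4} -> grp -> C) : Prop :=
  match M with
  | K2P => forall e, a e nG = a e nT
  | JC => forall e, a e nC = a e nG /\ a e nG = a e nT
  end.

Definition param (C : ringType) (T : tree) (a : {set 'I_4} -> grp -> C)
  : 'I_256 -> C :=
  fun k => if gsum setT (qdec k) == gzero
           then \prod_(A <- splits T) a A (gsum A (qdec k))
           else 0.

(* ---------- affine geometry in C^256 ----------
   A projective variety in P^255 is represented by its affine cone in C^256. *)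
Definition pt (C : ringType) := 'I_256 -> C.

Definition vanishes_on (C : comRingType) (p : {mpoly C[256]}) (S : pt C -> Prop)
  : Prop := forall x, S x -> p.@[x] = 0.

Definition ideal_of (C : comRingType) (S : pt C -> Prop) (p : {mpoly C[256]})
  : Prop := vanishes_on p S.

Definition zclosure (C : comRingType) (S : pt C -> Prop) : pt C -> Prop :=
  fun x => forall p : {mpoly C[256]}, vanishes_on p S -> p.@[x] = 0.

Definition cone (C : ringType) (S : pt C -> Prop) : pt C -> Prop :=
  fun x => exists (l : C) (y : pt C), S y /\ x = (fun k => l * y k).

Definition VT (C : comRingType) (M : model) (T : tree) : pt C -> Prop :=
  zclosure (cone (fun x => exists a, model_params M a /\ x = param T a)).

(* affine cone of the join V * W: closure of the union of the lines joining
   points of V and W, i.e. closure of { v + w | v in cone V, w in cone W } *)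
Definition join (C : comRingType) (V W : pt C -> Prop) : pt C -> Prop :=
  zclosure (fun x => exists v w, V v /\ W w /\ x = (fun k => v k + w k)).

Definition flin (C : comRingType) : {mpoly C[256]} :=
  'X_(qidx nG nG nG nG) + 'X_(qidx nG nT nG nT)
  - 'X_(qidx nG nG nT nT) - 'X_(qidx nG nT nT nG).

From HB Require Import structures.
From mathcomp Require Import all_boot all_order all_algebra.
From mathcomp Require Import reals complex.
From mathcomp Require Import mpoly.
From mathcomp Require Import ring.
From Stdlib Require Import FunctionalExtensionality.
Import GRing.Theory Num.Theory.
Set Implicit Arguments.
Local Open Scope ring_scope.
Local Open Scope complex_scope.

(* At the four coordinates of f the leaf parameters contribute
   a_1G a_2(g_2) a_3(g_3) a_4(g_4), the same product for all four once
   a_G = a_T (K2P, hence also JC).  The parameter of the internal edge is read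
   at g_1 + g_2 on T_{12|34} and at g_1 + g_4 on T_{14|23}, giving labels
   A, C, A, C resp. A, C, C, A on q_GGGG, q_GTGT, q_GGTT, q_GTTG, so f cancels on
   both parametrizations; being linear, it vanishes on their cones, closures
   and join.  On T_{13|24} the labels are A, A, C, C, so f equals
   2 a_1G a_2G a_3G a_4G (a^e_A - a^e_C), which is 2 for a^e_A = 2 and all
   other parameters 1. *)

Lemma gaddA : associative gadd.
Proof. by case=> [[] []] [[] []] [[] []]. Qed.

Lemma gaddC : commutative gadd.
Proof. by case=> [[] []] [[] []]. Qed.

Lemma gadd0g : left_id gzero gadd.
Proof. by case=> [[] []]. Qed.

HB.instance Definition _ := Monoid.isComLaw.Build grp gzero gadd gaddA gaddC gadd0g.

Lemma gsumE (A : {set 'I_4}) g : gsum A g = \big[gadd/gzero]_(i in A) g i.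
Proof. by rewrite /gsum foldrE big_map big_enum. Qed.

Lemma gsum_set1 (i : 'I_4) g : gsum [set i] g = g i.
Proof. by rewrite gsumE big_set1. Qed.

Lemma gsum_set2 (i j : 'I_4) g : i != j -> gsum [set i; j] g = gadd (g i) (g j).
Proof. by move=> neq_ij; rewrite gsumE big_setU1 ?big_set1 ?inE. Qed.

Lemma qdec_qidx g1 g2 g3 g4 (i : 'I_4) :
  qdec (qidx g1 g2 g3 g4) i = nth gzero [:: g1; g2; g3; g4] i.
Proof.
rewrite /qdec /qidx inordK; last first.
  by case: g1 => [[] []]; case: g2 => [[] []]; case: g3 => [[] []]; case: g4 => [[] []].
case: i => [[|[|[|[|//]]]] lt_i4];
by case: g1 => [[] []]; case: g2 => [[] []]; case: g3 => [[] []]; case: g4 => [[] []].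
Qed.

Lemma gsum_setT_qidx g1 g2 g3 g4 :
  gsum setT (qdec (qidx g1 g2 g3 g4)) = gadd g1 (gadd g2 (gadd g3 g4)).
Proof.
rewrite gsumE (eq_bigl xpredT) => [|i]; last by rewrite inE.
by rewrite !big_ord_recl big_ord0 !qdec_qidx /= Monoid.mulm1.
Qed.

Definition partner (T : tree) : 'I_4 :=
  leaf (match T with T12_34 => 1 | T13_24 => 2 | T14_23 => 3 end).

Lemma nt_splitE T : nt_split T = [set leaf 0; partner T].
Proof. by case: T. Qed.

Lemma leaf0_neq_partner T : leaf 0 != partner T.
Proof. by case: T; rewrite -val_eqE /= /leaf !inordK. Qed.

Definition nt_label (T : tree) (g1 g2 g3 g4 : grp) : grp :=
  gadd g1 (nth gzero [:: g1; g2; g3; g4] (partner T)).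

Lemma param_qidx (C : nzRingType) T (a : {set 'I_4} -> grp -> C) g1 g2 g3 g4 :
    gadd g1 (gadd g2 (gadd g3 g4)) = gzero ->
  param T a (qidx g1 g2 g3 g4) =
    a [set leaf 0] g1 * a [set leaf 1] g2 * a [set leaf 2] g3 * a [set leaf 3] g4
    * a (nt_split T) (nt_label T g1 g2 g3 g4).
Proof.
move=> sum0; rewrite /param gsum_setT_qidx sum0 eqxx /splits !big_cons big_nil.
rewrite {2}nt_splitE gsum_set2 ?leaf0_neq_partner // !gsum_set1 !qdec_qidx.
by rewrite !mulrA mulr1 /nt_label /leaf !inordK //; case: T.
Qed.

Section LinearForm.
Variable C : comNzRingType.
Notation f := (flin C).

Lemma flinE (x : pt C) : f.@[x] =
  x (qidx nG nG nG nG) + x (qidx nG nT nG nT) - x (qidx nG nG nT nT) - x (qidx nG nT nT nG).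
Proof. by rewrite /flin !mevalB mevalD !mevalXU. Qed.

Lemma flin_add (v w : pt C) : f.@[fun k => v k + w k] = f.@[v] + f.@[w].
Proof. by rewrite !flinE; ring. Qed.

Lemma flin_scale l (y : pt C) : f.@[fun k => l * y k] = l * f.@[y].
Proof. by rewrite !flinE; ring. Qed.

Lemma flin_param T (a : {set 'I_4} -> grp -> C) : (forall e, a e nG = a e nT) ->
  f.@[param T a] =
    a [set leaf 0] nG * a [set leaf 1] nG * a [set leaf 2] nG * a [set leaf 3] nG
    * (a (nt_split T) (nt_label T nG nG nG nG) + a (nt_split T) (nt_label T nG nT nG nT)
       - a (nt_split T) (nt_label T nG nG nT nT) - a (nt_split T) (nt_label T nG nT nT nG)).
Proof. by move=> aGT; rewrite flinE !param_qidx // -!aGT; ring. Qed.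

Lemma flin_param_eq0 T (a : {set 'I_4} -> grp -> C) :
  T <> T13_24 -> (forall e, a e nG = a e nT) -> f.@[param T a] = 0.
Proof.
move=> T_ne aGT; rewrite flin_param //.
case: T T_ne => [_ | /(_ erefl) [] | _];
by rewrite /nt_label /partner /leaf inordK //=; ring.
Qed.

Lemma flin_param_T13_24 (a : {set 'I_4} -> grp -> C) : (forall e, a e nG = a e nT) ->
  f.@[param T13_24 a] =
    2 * (a [set leaf 0] nG * a [set leaf 1] nG * a [set leaf 2] nG * a [set leaf 3] nG)
    * (a (nt_split T13_24) nA - a (nt_split T13_24) nC).
Proof. by move=> aGT; rewrite flin_param // /nt_label /partner /leaf inordK //=; ring. Qed.
End LinearForm.

Section Geometry.
Variable C : comNzRingType.
Implicit Types (S V W : pt C -> Prop) (p : {mpoly C[256]}).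

Lemma zclosure_sub S x : S x -> zclosure S x.
Proof. by move=> Sx p; apply. Qed.

Lemma cone_sub S x : S x -> cone S x.
Proof.
by move=> Sx; exists 1, x; split=> //; apply: functional_extensionality => k; rewrite mul1r.
Qed.

Lemma vanishes_on_zclosure p S : vanishes_on p S -> vanishes_on p (zclosure S).
Proof. by move=> pS x; apply. Qed.

Lemma flin_vanishes_on_cone S : vanishes_on (flin C) S -> vanishes_on (flin C) (cone S).
Proof. by move=> fS _ [l [y [Sy ->]]]; rewrite flin_scale fS ?mulr0. Qed.

Lemma flin_vanishes_on_join V W :
  vanishes_on (flin C) V -> vanishes_on (flin C) W -> vanishes_on (flin C) (join V W).
Proof.
move=> fV fW; apply: vanishes_on_zclosure => _ [v [w [Vv [Ww ->]]]].
by rewrite flin_add fV ?fW ?addr0.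
Qed.

Lemma model_params_K2P M (a : {set 'I_4} -> grp -> C) :
  model_params M a -> forall e, a e nG = a e nT.
Proof. by case: M => /= a_eq e; case: (a_eq e). Qed.

Lemma param_in_VT T {M} {a : {set 'I_4} -> grp -> C} :
  model_params M a -> VT M T (param T a).
Proof. by move=> aM; apply/zclosure_sub/cone_sub; exists a. Qed.

Lemma flin_vanishes_on_VT M T : T <> T13_24 -> vanishes_on (flin C) (VT M T).
Proof.
move=> T_ne; apply/vanishes_on_zclosure/flin_vanishes_on_cone => _ [a [aM ->]].
exact/flin_param_eq0/model_params_K2P/aM.
Qed.
End Geometry.

Theorem lemma4 (R : realType) (M : model) :
  ideal_of (join (VT (C := R[i]) M T12_34) (VT (C := R[i]) M T14_23))
           (flin R[i])
  /\ ~ ideal_of (VT (C := R[i]) M T13_24) (flin R[i]).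
Proof.
split; first by apply: flin_vanishes_on_join; apply: flin_vanishes_on_VT.
pose a (e : {set 'I_4}) (g : grp) : R[i] := if g == nA then 2 else 1.
have aM : model_params M a by case: M.
move=> /(_ _ (param_in_VT (T := T13_24) aM)); apply/eqP.
rewrite flin_param_T13_24; last exact: model_params_K2P aM.
by rewrite /a /= !mulr1 (_ : 2 - 1 = 1 :> R[i]) ?mulr1 ?pnatr_eq0 //; ring.
Qed.
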